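(* Let $\mathcal C$ be a linear $[n,k]$ MDS code over $F$, and let $L\in\mathbb Z^+$ satisfy $$L<\max\left\{\binom{n-1}{k-1}\Big/\binom{\lceil (n+k)/2\rceil-2}{k-1},\;k\right\}+1,$$ where the ratio is interpreted as $+\infty$ if its denominator is $0$. If $\mathcal C$ is $L$-MDS, then $\mathcal C$ is $\ell$-MDS for every $\ell\in\{1,\dots,L\}$.
   Context: $F=\mathrm{GF}(q)$; $\mathsf w(\cdot)$ is Hamming weight. For $L\in\mathbb Z^+$ and nonnegative $\tau\in\frac{1}{L+1}\mathbb Z$, a code $\mathcal C\subseteq F^n$ is strongly-$(\tau,L)$-list decodable if there do not exist $y\in F^n$ and $L+1$ distinct codewords $c_0,\dots,c_L\in\mathcal C$ with $\sum_{m=0}^{L}\mathsf w(y-c_m)\le(L+1)\tau$. A linear $[n,k]$ code over $F$ is called $L$-MDS if it is strongly-$\left(\frac{L(n-k)}{L+1},L\right)$-list decodable; equivalently, any $L+1$ distinct vectors lying in a common coset of the code have total Hamming weight greater than $L(n-k)$. (1-MDS coincides with MDS.) *)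

From HB Require Import structures.
From mathcomp Require Import all_boot all_order all_algebra all_field.
Set Implicit Arguments. Unset Strict Implicit. Unset Printing Implicit Defensive.
Import Order.TTheory GRing.Theory Num.Theory.
Local Open Scope ring_scope.

Definition hw (F : finFieldType) (n : nat) (x : 'rV[F]_n) : nat :=
  #|[set i : 'I_n | x 0 i != 0]|.

Definition linear_code (F : finFieldType) (n k : nat) (C : {vspace 'rV[F]_n}) : Prop :=
  \dim C = k.

(* MDS: minimum distance n - k + 1, i.e. every nonzero codeword has weight >= n-k+1. *)
Definition MDS (F : finFieldType) (n k : nat) (C : {vspace 'rV[F]_n}) : Prop :=
  forall c, c \in C -> c != 0 -> (n - k + 1 <= hw c)%N.

Definition strongly_list_decodable (F : finFieldType) (n : nat)
  (C : {vspace 'rV[F]_n}) (tau : rat) (L : nat) : Prop :=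
  ~ exists (y : 'rV[F]_n) (c : 'I_L.+1 -> 'rV[F]_n),
      [/\ injective c, (forall m, c m \in C) &
          ((\sum_(m < L.+1) hw (y - c m))%N%:R <= L.+1%:R * tau :> rat)].

Definition L_MDS (F : finFieldType) (n k : nat) (C : {vspace 'rV[F]_n}) (L : nat) : Prop :=
  strongly_list_decodable C ((L * (n - k))%N%:R / L.+1%:R) L.

From HB Require Import structures.
From mathcomp Require Import all_boot all_order all_algebra all_field.
From mathcomp Require Import zify.
Set Implicit Arguments. Unset Strict Implicit. Unset Printing Implicit Defensive.
Import Order.TTheory GRing.Theory Num.Theory.
Local Open Scope ring_scope.

(* Suppose [l + 1] distinct codewords lie at total distance at most [l (n - k)]
   from [y]. Then [y] is not a codeword, and adding to the list [L - l] further
   codewords at distance at most [n - k] from [y] would contradict [L]-MDS, so it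
   suffices to find more than [L] such codewords. In an MDS code any [k]
   coordinates form an information set: every [k]-set of coordinates is contained
   in the agreement set of some codeword with [y], and two distinct codewords
   agree with [y] simultaneously on fewer than [k] coordinates. Take [c0] with
   the most agreements and a coordinate [j] where [c0] disagrees with [y]. The
   [binom(n - 1, k - 1)] sets of [k - 1] coordinates avoiding [j] are covered by
   the agreement sets of codewords agreeing with [y] at [j], and each of these
   codewords has at most [ceil((n + k)/2) - 1] agreements, because it shares
   fewer than [k] of them with [c0] and has no more than [c0]. Counting gives
   more than [binom(n - 1, k - 1) / binom(ceil((n + k)/2) - 2, k - 1)], and also
   at least [k + 1], codewords within distance [n - k] of [y]. *)

Lemma card_bigcup_le (I T : finType) (J : {set I}) (S : I -> {set T}) :
  (#|\bigcup_(i in J) S i| <= \sum_(i in J) #|S i|)%N.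
Proof.
elim/big_rec2: _ => [|i A s _ IH]; first by rewrite cards0.
by apply: leq_trans (leq_card_setU _ _) _; rewrite leq_add2l.
Qed.

Lemma leq_of_lt_max_ratio (R : realFieldType) (a b N k L : nat) :
  (0 < a)%N -> (k <= N)%N -> (a <= N * b)%N ->
  (b == 0)%N || (L%:R < Num.max (a%:R / b%:R) k%:R + 1 :> R) -> (L <= N)%N.
Proof.
move=> a_gt0 kN aNb; have b_gt0 : (0 < b)%N.
  by rewrite lt0n; apply: contraTneq aNb => ->; rewrite muln0 -ltnNge.
rewrite eqn0Ngt b_gt0 /= => ltL.
have : L%:R < N.+1%:R :> R.
  apply: lt_le_trans ltL _; rewrite -addn1 natrD lerD2r ge_max ler_nat kN andbT.
  by rewrite ler_pdivrMr ?ltr0n // -natrM ler_nat.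
by rewrite ltr_nat ltnS.
Qed.

Section Agreement.
Variables (F : finFieldType) (n : nat).
Implicit Types y c : 'rV[F]_n.

Definition agree y c : {set 'I_n} := [set i | c 0 i == y 0 i].

Lemma hw_agree y c : hw (y - c) = (n - #|agree y c|)%N.
Proof.
rewrite /hw; have -> : [set i | (y - c) 0 i != 0] = ~: agree y c.
  by apply/setP => i; rewrite !inE !mxE subr_eq0 eq_sym.
by rewrite cardsCs setCK card_ord.
Qed.

End Agreement.

Lemma L_MDS_setP (F : finFieldType) (n k : nat) (C : {vspace 'rV[F]_n}) (L : nat) :
  L_MDS k C L <-> ~ exists y (H : {set 'rV[F]_n}),
    [/\ {subset H <= C}, #|H| = L.+1 & (\sum_(x in H) hw (y - x) <= L * (n - k))%N].
Proof.
have sumE s : (s%:R <= L.+1%:R * ((L * (n - k))%N%:R / L.+1%:R) :> rat)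
              = (s <= L * (n - k))%N.
  by rewrite mulrC divfK ?pnatr_eq0 // ler_nat.
split=> noList.
- move=> [y [H [HC cardH sumH]]]; apply: noList; exists y.
  pose s := enum H; have s_uniq : uniq s := enum_uniq (mem H).
  have size_s : size s = L.+1 by rewrite -cardE.
  exists (fun i : 'I_L.+1 => nth 0 s i); split.
  + by move=> i j /eqP; rewrite nth_uniq ?size_s // => /eqP /val_inj.
  + by move=> i; apply: HC; rewrite -mem_enum mem_nth ?size_s.
  rewrite sumE -(big_mkord xpredT (fun i => hw (y - nth 0 s i))) -size_s.
  by rewrite -(big_nth 0 xpredT (fun x => hw (y - x))) big_enum.
- move=> [y [c [c_inj cC sum_c]]]; apply: noList; exists y.
  exists [set c m | m : 'I_L.+1]; split.
  + by move=> _ /imsetP[m _ ->].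
  + by rewrite card_imset // card_ord.
  by rewrite big_imset /= -?sumE //; move=> m1 m2 _ _ /c_inj.
Qed.

Section MDSCode.
Variables (F : finFieldType) (n k : nat) (C : {vspace 'rV[F]_n}).

Definition near_codewords y := [set c | (c \in C) && (k <= #|agree y c|)%N].

Lemma sum_hw_near_leq y (D : {set 'rV[F]_n}) : D \subset near_codewords y ->
  (\sum_(x in D) hw (y - x) <= #|D| * (n - k))%N.
Proof.
move=> sD; rewrite -sum_nat_const; apply: leq_sum => x /(subsetP sD).
by rewrite inE hw_agree => /andP[_ /leq_sub2l].
Qed.

Lemma extend_by_near_codewords y (A : {set 'rV[F]_n}) l L :
  {subset A <= C} -> #|A| = l.+1 -> (\sum_(x in A) hw (y - x) <= l * (n - k))%N ->
  (l <= L)%N -> (L < #|near_codewords y|)%N ->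
  exists H : {set 'rV[F]_n}, [/\ {subset H <= C}, #|H| = L.+1 &
    (\sum_(x in H) hw (y - x) <= L * (n - k))%N].
Proof.
move=> AC cardA sumA lL L_lt.
have [D D_sub cardD] :
    exists2 D : {set 'rV[F]_n}, D \subset near_codewords y :\: A & #|D| = (L - l)%N.
  have : (0 < #|[set D : {set 'rV[F]_n} |
                   D \subset near_codewords y :\: A & #|D| == (L - l)%N]|)%N.
    rewrite cards_draws bin_gt0 cardsD.
    have := subset_leq_card (subsetIr (near_codewords y) A); rewrite cardA.
    move: #|near_codewords y| #|_ :&: _| L_lt; lia.
  by case/card_gt0P => D; rewrite inE => /andP[? /eqP ?]; exists D.
move: D_sub; rewrite subsetD => /andP[D_near D_disj].
have A_disj : [disjoint A & D] by rewrite disjoint_sym.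
exists (A :|: D); split.
- move=> x; rewrite in_setU => /orP[/AC // | /(subsetP D_near)].
  by rewrite inE => /andP[].
- by move: A_disj; rewrite -setI_eq0 cardsU => /eqP ->; rewrite cards0 cardA cardD; lia.
rewrite (eq_bigl [predU A & D]) ?bigU //; last by move=> x; rewrite !inE.
apply: leq_trans (leq_add sumA (sum_hw_near_leq D_near)) _.
by rewrite cardD -mulnDl subnKC.
Qed.

Hypothesis mdsC : MDS k C.

Lemma codeword_eq_of_agree c c' : c \in C -> c' \in C ->
  (k <= #|agree c c'|)%N -> c = c'.
Proof.
move=> cC c'C k_agree; apply/eqP; rewrite -subr_eq0; apply/negPn/negP.
by move/(mdsC (rpredB cC c'C)); rewrite hw_agree; lia.
Qed.

Lemma card_agreeI_lt y c c' : c \in C -> c' \in C -> c != c' ->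
  (#|agree y c :&: agree y c'| < k)%N.
Proof.
move=> cC c'C; rewrite ltnNge; apply: contra => k_agree.
apply/eqP/codeword_eq_of_agree => //; apply: leq_trans k_agree (subset_leq_card _).
by apply/subsetP => i; rewrite !inE => /andP[/eqP -> /eqP ->].
Qed.

Lemma sum_hw_codeword_geq y (A : {set 'rV[F]_n}) : y \in C -> {subset A <= C} ->
  ((#|A| - 1) * (n - k + 1) <= \sum_(x in A) hw (y - x))%N.
Proof.
move=> yC AC; rewrite (big_setID [set y]) /=; apply: leq_trans (leq_addl _ _).
apply: (@leq_trans (#|A :\ y| * (n - k + 1))).
  by rewrite leq_mul2r (cardsD1 y A) leq_subLR leq_add2r leq_b1 orbT.
rewrite -sum_nat_const; apply: leq_sum => x; rewrite !inE => /andP[xy xA].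
by apply: mdsC (rpredB yC (AC x xA)) _; rewrite subr_eq0 eq_sym.
Qed.

Hypothesis dimC : \dim C = k.

Lemma code_dim_leq : (k <= n)%N.
Proof. by have := dimvS (subvf C); rewrite dimvf dim_matrix mul1r dimC. Qed.

Lemma card_subset_code (A : {set 'rV[F]_n}) : {subset A <= C} -> (#|A| <= #|F| ^ k)%N.
Proof. by move=> AC; rewrite -dimC -card_vspace; apply/subset_leq_card/subsetP. Qed.

(* Restriction to [K] is injective on [C], hence onto since [#|C| = #|F| ^ #|K|]. *)
Lemma exists_codeword_agree y (K : {set 'I_n}) : #|K| = k ->
  exists2 c, c \in C & K \subset agree y c.
Proof.
move=> cardK.
pose r (c : 'rV[F]_n) : {ffun 'I_n -> F} := [ffun i => if i \in K then c 0 i else 0].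
have r_on c : r c \in pffun_on 0 K (predT : pred F).
  apply/pffun_onP; split => //; apply/subsetP => i; rewrite !inE ffunE.
  by case: (i \in K); rewrite ?eqxx.
have r_agree c c' : r c = r c' -> K \subset agree c c'.
  move=> rE; apply/subsetP => i iK.
  by have := congr1 (fun f : {ffun 'I_n -> F} => f i) rE; rewrite /= !ffunE iK inE => ->.
pose CS := [set c : 'rV[F]_n | c \in C].
have r_inj : {in CS &, injective r}.
  move=> c c'; rewrite !inE => cC c'C /r_agree /subset_leq_card.
  by rewrite cardK; apply: codeword_eq_of_agree.
have r_onto : r @: CS =i pffun_on 0 K (predT : pred F).
  apply/subset_cardP; last by apply/subsetP => _ /imsetP[c _ ->].
  by rewrite card_pffun_on card_in_imset // cardsE card_vspace dimC cardK.
have /imsetP[c cCS rE] : r y \in r @: CS by rewrite r_onto.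
exists c; first by rewrite inE in cCS.
by apply/subsetP => i /(subsetP (r_agree _ _ rE)); rewrite !inE eq_sym.
Qed.

Section NearCodewords.
Variable y : 'rV[F]_n.
Hypothesis k_gt0 : (0 < k)%N.
Variables (c0 : 'rV[F]_n) (j : 'I_n).
Hypotheses (c0C : c0 \in C) (j_notin : j \notin agree y c0).
Hypothesis c0_max : forall c, c \in C -> (#|agree y c| <= #|agree y c0|)%N.

Definition near_at := [set c in near_codewords y | j \in agree y c].

Lemma near_max : c0 \in near_codewords y.
Proof.
have [K cardK] : exists K : {set 'I_n}, #|K| = k.
  have : (0 < #|[set K : {set 'I_n} | #|K| == k]|)%N.
    by rewrite card_draws card_ord bin_gt0 code_dim_leq.
  by case/card_gt0P => K; rewrite inE => /eqP; exists K.
have [c cC /subset_leq_card] := exists_codeword_agree y cardK.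
by rewrite cardK inE c0C => /leq_trans; apply; apply: c0_max.
Qed.

Lemma card_near_at_lt : (#|near_at| < #|near_codewords y|)%N.
Proof.
rewrite (cardsD1 c0 (near_codewords y)) near_max ltnS.
apply/subset_leq_card/subsetP => c.
rewrite inE => /andP[c_near jc]; rewrite in_setD1 c_near andbT.
by apply: contraTneq jc => ->.
Qed.

Lemma near_at_cover (T : {set 'I_n}) : j \notin T -> #|T| = (k - 1)%N ->
  exists2 c, c \in near_at & T \subset agree y c.
Proof.
move=> jT cardT; have cardjT : #|j |: T| = k by rewrite cardsU1 jT cardT; lia.
have [c cC jTc] := exists_codeword_agree y cardjT.
have jc : j \in agree y c by apply: (subsetP jTc); rewrite setU11.
exists c; last by apply: subset_trans jTc; apply: subsetUr.
by rewrite inE jc andbT inE cC -cardjT subset_leq_card.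
Qed.

(* Each [(k - 1)]-subset [T] of a [k]-set [K] of agreements of [c0] is
   [agree y c :&: K] for any [c] in [near_at] covering [T]. *)
Lemma leq_card_near_at : (k <= #|near_at|)%N.
Proof.
have : (0 < #|[set K : {set 'I_n} | K \subset agree y c0 & #|K| == k]|)%N.
  by rewrite cards_draws bin_gt0; have := near_max; rewrite inE => /andP[].
case/card_gt0P => K; rewrite inE => /andP[K_agree /eqP cardK].
pose TK := [set T : {set 'I_n} | T \subset K & #|T| == (k - 1)%N].
have cardTK : #|TK| = k by rewrite cards_draws cardK bin_sub // bin1.
rewrite -cardTK; apply: leq_trans (leq_imset_card (fun c => agree y c :&: K) _).
apply/subset_leq_card/subsetP => T; rewrite inE => /andP[TK' /eqP cardT].
have jT : j \notin T.
  by apply: contra j_notin => /(subsetP TK') /(subsetP K_agree).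
have [c c_near Tc] := near_at_cover jT cardT.
apply/imsetP; exists c => //; apply/eqP; rewrite eqEcard subsetI Tc TK' cardT /=.
have := c_near; rewrite inE => /andP[]; rewrite inE => /andP[cC _] jc.
have c_ne : c != c0 by apply: contraTneq jc => ->.
have := card_agreeI_lt y cC c0C c_ne.
have : agree y c :&: K \subset agree y c :&: agree y c0 by rewrite setIS.
move=> /subset_leq_card le_agree /(leq_ltn_trans le_agree) lt_k.
by rewrite subn1 -ltnS prednK.
Qed.

Lemma card_agree_near_at c : c \in near_at ->
  (#|agree y c :\ j| <= (n + k).+1 %/ 2 - 2)%N.
Proof.
rewrite inE => /andP[]; rewrite inE => /andP[cC _] jc.
have c_ne : c != c0 by apply: contraTneq jc => ->.
have := cardsD1 j (agree y c); rewrite jc add1n.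
have := c0_max cC; have := card_agreeI_lt y cC c0C c_ne.
have := cardsUI (agree y c) (agree y c0).
have := subset_leq_card (subsetT (agree y c :|: agree y c0)); rewrite cardsT card_ord.
move: #|agree y c| #|agree y c :\ j| #|agree y c0|.
move: #|agree y c :&: agree y c0| #|agree y c :|: agree y c0|.
lia.
Qed.

Lemma binomial_leq_card_near_at :
  ('C(n - 1, k - 1) <= #|near_at| * 'C((n + k).+1 %/ 2 - 2, k - 1))%N.
Proof.
pose draws c := [set T : {set 'I_n} | T \subset agree y c :\ j & #|T| == (k - 1)%N].
have -> : 'C(n - 1, k - 1)
          = #|[set T : {set 'I_n} | T \subset [set~ j] & #|T| == (k - 1)%N]|.
  by rewrite cards_draws cardsC1 card_ord subn1.
apply: (@leq_trans #|\bigcup_(c in near_at) draws c|).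
  apply/subset_leq_card/subsetP => T; rewrite inE => /andP[Tj /eqP cardT].
  have jT : j \notin T by apply/negP => /(subsetP Tj); rewrite !inE eqxx.
  have [c c_near Tc] := near_at_cover jT cardT.
  by apply/bigcupP; exists c; rewrite // inE subsetD1 Tc jT cardT /=.
apply: leq_trans (card_bigcup_le _ _) _; rewrite -sum_nat_const.
by apply: leq_sum => c c_near; rewrite cards_draws leq_bin2l ?card_agree_near_at.
Qed.

End NearCodewords.

Lemma ltn_card_near_codewords y (L : nat) : y \notin C -> (0 < k)%N ->
  ('C((n + k).+1 %/ 2 - 2, k - 1) == 0)%N ||
  (L%:R < Num.max ('C(n - 1, k - 1)%:R / 'C((n + k).+1 %/ 2 - 2, k - 1)%:R) k%:R + 1
    :> rat) ->
  (L < #|near_codewords y|)%N.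
Proof.
move=> yC k_gt0 hL.
have [c0 c0C c0_max] :=
  @arg_maxnP _ 0 (fun c => c \in C) (fun c => #|agree y c|) (mem0v C).
have [j j_notin] : exists j, j \notin agree y c0.
  apply/existsP; apply: contraNT yC => /existsPn agree_all.
  suff -> : y = c0 by [].
  by apply/rowP => i; have := agree_all i; rewrite inE negbK => /eqP ->.
have k_le := leq_card_near_at k_gt0 c0C j_notin c0_max.
have bin_le := binomial_leq_card_near_at k_gt0 c0C j_notin c0_max.
apply: leq_ltn_trans (card_near_at_lt c0C j_notin c0_max).
apply: leq_of_lt_max_ratio _ k_le bin_le hL.
by rewrite bin_gt0 leq_sub2r ?code_dim_leq.
Qed.

End MDSCode.

Theorem mainTheorem9 (F : finFieldType) (n k : nat) (C : {vspace 'rV[F]_n}) (L : nat) :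
  linear_code k C -> MDS k C -> (0 < L)%N ->
  (('C((n + k).+1 %/ 2 - 2, k - 1) == 0)%N ||
   (L%:R < Num.max ('C(n - 1, k - 1)%:R / 'C((n + k).+1 %/ 2 - 2, k - 1)%:R) k%:R + 1
     :> rat)) ->
  L_MDS k C L ->
  forall l : nat, (1 <= l <= L)%N -> L_MDS k C l.
Proof.
move=> dimC mdsC _ hL /L_MDS_setP LM l /andP[l_gt0 lL].
apply/L_MDS_setP => -[y [A [AC cardA sumA]]].
have yC : y \notin C.
  apply/negP => yC; have := leq_trans (sum_hw_codeword_geq mdsC yC AC) sumA.
  by rewrite cardA subn1 /= leq_mul2l addn1 ltnn orbF eqn0Ngt l_gt0.
have k_gt0 : (0 < k)%N.
  have := card_subset_code dimC AC; rewrite cardA lt0n.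
  by apply: contraTneq => ->; rewrite expn0 -leqNgt.
apply: LM; exists y; apply: (extend_by_near_codewords AC cardA sumA lL).
exact: (ltn_card_near_codewords mdsC dimC yC k_gt0 hL).
Qed.
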